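(* Fix an integer $m\ge 3$. Then $\lim_{n\to\infty}|\tau_{C_m\odot\overline{K}_n}|=\infty$.
   Context: $C_m$ is the cycle of length $m$. An edge-magic labeling of a $(p,q)$-graph $G$ (with $p$ vertices and $q$ edges) is a bijection $f:V(G)\cup E(G)\to[1,p+q]$ such that $f(x)+f(xy)+f(y)$ equals a constant (the valence) for every edge $xy$. For a graph $H$, $\tau_H$ is the set of integers that are valences of edge-magic labelings of $H$. $G\odot\overline{K}_n$ is the graph obtained from $G$ by attaching $n$ new pendant vertices to each vertex of $G$. *)

From mathcomp Require Import all_boot.
Set Implicit Arguments. Unset Strict Implicit. Unset Printing Implicit Defensive.

(* A (simple) graph is given by a finite vertex type V and an adjacency
   relation adj (assumed symmetric/irreflexive by the instances below). *)
Definition edges (V : finType) (adj : rel V) : {set {set V}} :=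
  [set e : {set V} | [exists x, exists y, adj x y && (e == [set x; y])]].

Definition elt (V : finType) (adj : rel V) : finType :=
  (V + {e : {set V} | e \in edges adj})%type.

Definition edge_magic_valence (V : finType) (adj : rel V)
    (f : elt adj -> nat) (k : nat) : Prop :=
  injective f /\
  (forall d, 1 <= f d <= #|elt adj|) /\
  (forall j, 1 <= j <= #|elt adj| -> exists d, f d = j) /\
  (forall (x y : V) (exy : [set x; y] \in edges adj), adj x y ->
     f (inl x) + f (inr (exist _ [set x; y] exy)) + f (inl y) = k).

Definition in_tau (V : finType) (adj : rel V) (k : nat) : Prop :=
  exists f : elt adj -> nat, edge_magic_valence f k.

Definition tau_card_ge (V : finType) (adj : rel V) (M : nat) : Prop :=
  exists s : seq nat, uniq s /\ M <= size s /\ (forall k, k \in s -> in_tau adj k).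

(* The corona C_m ⊙ \bar{K}_n: cycle vertices inl i (i < m), and pendant
   vertices inr (i, j) (j < n) attached to cycle vertex i. *)
Definition corona_vertex (m n : nat) : finType := ('I_m + ('I_m * 'I_n))%type.

Definition cycle_adj (m : nat) (i j : 'I_m) : bool :=
  (val j == (val i).+1 %% m) || (val i == (val j).+1 %% m).

Definition corona_adj (m n : nat) : rel (corona_vertex m n) :=
  fun u v =>
    match u, v with
    | inl i, inl j => cycle_adj i j
    | inl i, inr p => i == p.1
    | inr p, inl i => i == p.1
    | inr _, inr _ => false
    end.
Arguments corona_adj : clear implicits.

From mathcomp Require Import all_boot zify.
Set Implicit Arguments. Unset Strict Implicit. Unset Printing Implicit Defensive.

(* Start from an edge-magic total labeling of the cycle C_m by 0, ..., 2m-1: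
   vertex labels P w and edge labels Q w with P w + Q w + P (w+1) = K; such
   labelings exist for every m >= 3.  Blow each label a up into the block of
   the n+1 labels a(n+1) + t, 1 <= t <= n+1, and index the edges of
   C_m ⊙ K_n by vertices: cycle vertex i stands for the edge {i, i+1}, the
   pendant (i, j) for its own edge.  Block P w receives the cycle vertex w-1 at
   offset rho and the n pendants of w at the remaining offsets; block Q w
   receives the edges indexed by the same vertices at the complementary offsets
   n+2-t.  Every edge then sums to (K+1)(n+1) + rho + 1 and every block is
   filled exactly once, so this is an edge-magic labeling, and the n+1 choices
   of rho give n+1 distinct valences. *)

Lemma surj_leq_card (T T' : finType) (g : T -> T') :
  (forall y, exists x, g x = y) -> #|T'| <= #|T|.
Proof.
move=> g_surj; apply: leq_trans (leq_image_card g T); apply: subset_leq_card.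
by apply/subsetP => y _; have [x <-] := g_surj y; exact: image_f.
Qed.

Lemma inj_onto_interval (T : finType) (f : T -> nat) :
  injective f -> (forall x, 0 < f x <= #|T|) ->
  forall j, 0 < j <= #|T| -> exists x, f x = j.
Proof.
move=> f_inj f_range j j_range.
have ord_lt x : (f x).-1 < #|T| by have := f_range x; lia.
have ord_inj : injective (fun x => Ordinal (ord_lt x)).
  move=> x y [] fxy; apply: f_inj; have := f_range x; have := f_range y; lia.
have j_lt : j.-1 < #|T| by lia.
have /codomP [x /(congr1 val) /= fx] := inj_card_onto ord_inj (eq_leq (card_ord _)) (Ordinal j_lt).
by exists x; have := f_range x; lia.
Qed.

Lemma block_enc_inj b (c c' : nat * nat) : 0 < c.2 <= b -> 0 < c'.2 <= b ->
  c.1 * b + c.2 = c'.1 * b + c'.2 -> c = c'.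
Proof.
case: c c' => [a t] [a' t'] /= t_range t'_range e.
suff ea : a = a' by rewrite ea; congr pair; move: e; rewrite ea; lia.
nia.
Qed.

Lemma edgesP (V : finType) (adj : rel V) e :
  reflect (exists x y, adj x y /\ e = [set x; y]) (e \in edges adj).
Proof.
rewrite inE; apply: (iffP existsP) => [[x /existsP[y /andP[xy_adj /eqP ->]]]|[x [y [xy_adj ->]]]].
  by exists x, y.
by exists x; apply/existsP; exists y; rewrite xy_adj eqxx.
Qed.

Definition cycle_edge_magic (m K : nat) (P Q : nat -> nat) : Prop :=
  [/\ forall w, w < m -> P w < 2 * m /\ Q w < 2 * m,
      forall w, w < m -> P w + Q w + P (w.+1 %% m) = K,
      forall w w', w < m -> w' < m -> P w = P w' -> w = w',
      forall w w', w < m -> w' < m -> Q w = Q w' -> w = w' &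
      forall w w', w < m -> w' < m -> P w <> Q w'].

Ltac case_ifs := repeat (case: ifP => ?).

Definition odd_cycle_vlab (r w : nat) : nat :=
  if odd w then r.+1 + w./2 else w./2.
Definition odd_cycle_elab (r w : nat) : nat :=
  if w == r.*2 then 4 * r + 1 else 4 * r - w.

Lemma odd_cycle_edge_magic r : 0 < r ->
  cycle_edge_magic r.*2.+1 (5 * r + 1) (odd_cycle_vlab r) (odd_cycle_elab r).
Proof.
move=> r_gt0; rewrite /odd_cycle_vlab /odd_cycle_elab.
split=> [w w_lt|w w_lt|w w' w_lt w'_lt|w w' w_lt w'_lt|w w' w_lt w'_lt].
- by case_ifs; lia.
- have [->|w_ne] := eqVneq w r.*2; first by rewrite modnn /=; case_ifs; lia.
  by rewrite modn_small; [case_ifs; lia | lia].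
- by case_ifs; lia.
- by case_ifs; lia.
- by case_ifs; lia.
Qed.

Definition even_cycle_vlab (p w : nat) : nat :=
  if w == 0 then 3 * p - 1
  else if w < p then (if odd w then w.+1./2 else p - 2 + w./2)
  else if w == p then (3 * p - 1)./2
  else if w == p.+1 then (3 * p - 1)./2 - 1
  else if w < p.*2.-1 then (if odd w then w.-1./2 else p - 1 + w./2)
  else 0.

Definition even_cycle_elab (p w : nat) : nat :=
  if w == 0 then 2 * p - 1
  else if w <= p - 2 then 4 * p - w
  else if w == p - 1 then (if odd p then 2 * p + 2 else 3 * p)
  else if w == p then (if odd p then 2 * p + 1 else 2 * p + 2)
  else if w == p.+1 then (if odd p then 3 * p else 2 * p + 1)
  else if w <= 2 * p - 3 then 4 * p - w
  else if w == 2 * p - 2 then 3 * p + 1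
  else 2 * p.

Lemma even_cycle_edge_magic p : 3 < p ->
  cycle_edge_magic p.*2 (5 * p - 1) (even_cycle_vlab p) (even_cycle_elab p).
Proof.
move=> p_gt3; rewrite /even_cycle_vlab /even_cycle_elab.
split=> [w w_lt|w w_lt|w w' w_lt w'_lt|w w' w_lt w'_lt|w w' w_lt w'_lt].
- by case_ifs; lia.
- have [->|w_ne] := eqVneq w p.*2.-1.
    by rewrite prednK ?modnn /=; [case_ifs; lia | lia].
  by rewrite modn_small; [case_ifs; lia | lia].
- by case_ifs; lia.
- by case_ifs; lia.
- by case_ifs; lia.
Qed.

Lemma cycle4_edge_magic :
  cycle_edge_magic 4 9 (nth 0 [:: 0; 2; 1; 5]) (nth 0 [:: 7; 6; 3; 4]).
Proof.
split.
- by case=> [|[|[|[|w]]]].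
- by case=> [|[|[|[|w]]]].
- by case=> [|[|[|[|w]]]]; case=> [|[|[|[|w']]]].
- by case=> [|[|[|[|w]]]]; case=> [|[|[|[|w']]]].
- by case=> [|[|[|[|w]]]]; case=> [|[|[|[|w']]]].
Qed.

Lemma cycle6_edge_magic :
  cycle_edge_magic 6 14 (nth 0 [:: 0; 4; 1; 2; 5; 6]) (nth 0 [:: 10; 9; 11; 7; 3; 8]).
Proof.
split.
- by case=> [|[|[|[|[|[|w]]]]]].
- by case=> [|[|[|[|[|[|w]]]]]].
- by case=> [|[|[|[|[|[|w]]]]]]; case=> [|[|[|[|[|[|w']]]]]].
- by case=> [|[|[|[|[|[|w]]]]]]; case=> [|[|[|[|[|[|w']]]]]].
- by case=> [|[|[|[|[|[|w]]]]]]; case=> [|[|[|[|[|[|w']]]]]].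
Qed.

Lemma cycle_edge_magic_exists m : 2 < m -> exists K P Q, cycle_edge_magic m K P Q.
Proof.
move=> m_gt2; have m_eq := odd_double_half m.
case: (odd m) m_eq => /= m_eq; rewrite -m_eq; first by do 3 eexists; apply: odd_cycle_edge_magic; lia.
have [p_gt3|p_le3] := ltnP 3 m./2; first by do 3 eexists; apply: even_cycle_edge_magic.
have [->|->] : m./2 = 2 \/ m./2 = 3 by lia.
  by do 3 eexists; exact: cycle4_edge_magic.
by do 3 eexists; exact: cycle6_edge_magic.
Qed.



Definition skip (rho j : nat) : nat := if j.+1 < rho then j.+1 else j.+2.

Lemma skip_neq rho j : skip rho j != rho.
Proof. by rewrite /skip; case: ifP => ?; lia. Qed.

Lemma skip_inj rho : injective (skip rho).
Proof. by move=> j j'; rewrite /skip; do 2 case: ifP => ?; lia. Qed.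

Lemma skip_range rho n j : j < n -> 0 < skip rho j <= n.+1.
Proof. by rewrite /skip; case: ifP => ?; lia. Qed.

Lemma ord_neq_succ_mod m (i : 'I_m) : 1 < m -> i != i.+1 %% m :> nat.
Proof.
move=> m_gt1; have i_lt := ltn_ord i.
have [e|?] := eqVneq i.+1 m; first by rewrite e modnn; lia.
by rewrite modn_small; lia.
Qed.



Section CoronaLabeling.

Variables (m n K : nat) (P Q : nat -> nat) (rho : nat).
Hypotheses (m_gt1 : 1 < m) (PQ_magic : cycle_edge_magic m K P Q)
  (rho_range : 0 < rho <= n.+1).

Local Notation V := (corona_vertex m n).
Local Notation adj := (corona_adj m n).

Definition block_index (v : V) : 'I_m :=
  match v with inl i => ordS i | inr (i, _) => i end.

Definition block_offset (v : V) : nat :=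
  match v with inl _ => rho | inr (_, j) => skip rho j end.

Lemma block_offset_range v : 0 < block_offset v <= n.+1.
Proof. by case: v => [i|[i j]] //=; exact: skip_range. Qed.

Lemma block_inj v v' :
  block_index v = block_index v' -> block_offset v = block_offset v' -> v = v'.
Proof.
case: v => [i|[i j]]; case: v' => [i'|[i' j']] /= ei ej.
- by rewrite (ordS_inj ei).
- by move: (skip_neq rho j'); rewrite -ej eqxx.
- by move: (skip_neq rho j); rewrite ej eqxx.
- by rewrite ei (val_inj (skip_inj ej)).
Qed.

Definition elt_code (d : V + V) : nat * nat :=
  match d with
  | inl v => (P (block_index v), block_offset v)
  | inr v => (Q (block_index v), n.+2 - block_offset v)
  end.

Lemma elt_code_inj : injective elt_code.
Proof.
case: PQ_magic => _ _ P_inj Q_inj PQ_neq.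
have offset_range := block_offset_range.
case=> [v|v] [v'|v'] /= [e1 e2].
- by congr inl; apply: block_inj e2; exact: val_inj (P_inj _ _ (ltn_ord _) (ltn_ord _) e1).
- by case: (PQ_neq _ _ (ltn_ord _) (ltn_ord _) e1).
- by case: (PQ_neq _ _ (ltn_ord _) (ltn_ord _) (esym e1)).
- congr inr; apply: block_inj; first exact: val_inj (Q_inj _ _ (ltn_ord _) (ltn_ord _) e1).
  by move: e2 (offset_range v) (offset_range v'); lia.
Qed.

Lemma elt_code_offset_range d : 0 < (elt_code d).2 <= n.+1.
Proof. by case: d => v /=; have := block_offset_range v; lia. Qed.

Definition elt_label (d : V + V) : nat := (elt_code d).1 * n.+1 + (elt_code d).2.

Lemma elt_label_inj : injective elt_label.
Proof.
move=> d d' /(block_enc_inj (elt_code_offset_range d) (elt_code_offset_range d')).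
exact: elt_code_inj.
Qed.

Lemma elt_label_range d : 0 < elt_label d <= 2 * m * n.+1.
Proof.
case: PQ_magic => PQ_lt _ _ _ _.
case: d => [v|v]; have [P_lt Q_lt] := PQ_lt _ (ltn_ord (block_index v));
  rewrite /elt_label /=; have := block_offset_range v; nia.
Qed.

Definition edge_ends (v : V) : V * V :=
  match v with inl i => (inl i, inl (ordS i)) | inr (i, j) => (inl i, inr (i, j)) end.

Lemma edge_ends_adj v : adj (edge_ends v).1 (edge_ends v).2.
Proof. by case: v => [i|[i j]] /=; rewrite ?/cycle_adj eqxx. Qed.

Lemma adj_edge_ends x y : adj x y ->
  exists v, [set x; y] = [set (edge_ends v).1; (edge_ends v).2].
Proof.
case: x => [i|[i j]]; case: y => [i'|[i' j']] //=.
- case/orP=> /eqP e.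
    by exists (inl i); rewrite (_ : i' = ordS i) //; apply: val_inj.
  by exists (inl i'); rewrite setUC (_ : i = ordS i') //; apply: val_inj.
- by move/eqP->; exists (inr (i', j')).
- by move/eqP->; exists (inr (i, j)); rewrite setUC.
Qed.

Definition valence : nat := K * n.+1 + rho + n.+2.

Lemma edge_ends_magic v :
  elt_label (inl (edge_ends v).1) + elt_label (inr v) + elt_label (inl (edge_ends v).2)
  = valence.
Proof.
case: PQ_magic => _ PQ_sum _ _ _.
rewrite /elt_label /valence -(PQ_sum _ (ltn_ord (block_index v))) !mulnDl.
case: v => [i|[i j]] /=; first lia.
by have := skip_range rho (ltn_ord j); lia.
Qed.

Lemma adj_neq x y : adj x y -> x != y.
Proof.
case: x => [i|[i j]]; case: y => [i'|[i' j']] //= x_adj.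
apply/eqP=> -[ii']; move: x_adj; rewrite /cycle_adj -ii' orbb.
by rewrite (negPf (ord_neq_succ_mod i m_gt1)).
Qed.

Lemma sum_edge_ends v :
  \sum_(u in [set (edge_ends v).1; (edge_ends v).2]) elt_label (inl u)
  = elt_label (inl (edge_ends v).1) + elt_label (inl (edge_ends v).2).
Proof. by rewrite big_setU1 ?big_set1 // in_set1 adj_neq // edge_ends_adj. Qed.

(* The edge labels are forced by magicness; [corona_label_elt_of] shows that
   they are the block labels of the edges. *)
Definition corona_label (d : elt adj) : nat :=
  match d with
  | inl v => elt_label (inl v)
  | inr e => valence - \sum_(u in val e) elt_label (inl u)
  end.

Lemma edge_ends_edge v : [set (edge_ends v).1; (edge_ends v).2] \in edges adj.
Proof. by apply/edgesP; do 2 eexists; split; first exact: edge_ends_adj. Qed.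

Definition elt_of (d : V + V) : elt adj :=
  match d with
  | inl v => inl v
  | inr v => inr (exist (fun e => e \in edges adj) _ (edge_ends_edge v))
  end.

Lemma corona_label_elt_of d : corona_label (elt_of d) = elt_label d.
Proof.
by case: d => [v|v] //=; rewrite sum_edge_ends -(edge_ends_magic v) addnAC addKn.
Qed.

Lemma elt_of_inj : injective elt_of.
Proof.
by move=> d d' /(congr1 corona_label); rewrite !corona_label_elt_of => /elt_label_inj.
Qed.

Lemma elt_of_surj e : exists d, elt_of d = e.
Proof.
case: e => [v|[e e_edge]]; first by exists (inl v).
have /edgesP[x [y [xy_adj e_xy]]] := e_edge.
have [v xy_ends] := adj_edge_ends xy_adj.
by exists (inr v); congr inr; apply: val_inj; rewrite /= e_xy xy_ends.
Qed.

Lemma card_corona_elt : #|elt adj| = 2 * m * n.+1.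
Proof.
have -> : 2 * m * n.+1 = #|{: V + V}|.
  by rewrite card_sum card_sum card_prod !card_ord; lia.
apply/eqP; rewrite eqn_leq (surj_leq_card elt_of_surj).
exact: leq_card elt_of_inj.
Qed.

Lemma corona_label_inj : injective corona_label.
Proof.
move=> e e'; have [d <-] := elt_of_surj e; have [d' <-] := elt_of_surj e'.
by rewrite !corona_label_elt_of => /elt_label_inj ->.
Qed.

Lemma corona_label_range e : 0 < corona_label e <= #|elt adj|.
Proof.
by have [d <-] := elt_of_surj e; rewrite corona_label_elt_of card_corona_elt elt_label_range.
Qed.

Lemma corona_label_edge x y (xy_edge : [set x; y] \in edges adj) : adj x y ->
  corona_label (inl x) + corona_label (inr (exist _ [set x; y] xy_edge)) + corona_label (inl y)
  = valence.
Proof.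
move=> xy_adj; have [v xy_ends] := adj_edge_ends xy_adj.
have sum_xy : \sum_(u in [set x; y]) elt_label (inl u) = elt_label (inl x) + elt_label (inl y).
  by rewrite big_setU1 ?big_set1 // in_set1 adj_neq.
have le_valence : \sum_(u in [set x; y]) elt_label (inl u) <= valence.
  by rewrite xy_ends sum_edge_ends -(edge_ends_magic v) addnAC leq_addr.
by rewrite /= sum_xy in le_valence *; rewrite addnAC subnKC.
Qed.

Lemma valence_in_tau : in_tau adj valence.
Proof.
exists corona_label; split; first exact: corona_label_inj.
split; first exact: corona_label_range.
split; first exact: inj_onto_interval corona_label_inj corona_label_range.
exact: corona_label_edge.
Qed.
End CoronaLabeling.

Theorem mainTheorem5 (m : nat) (hm : 3 <= m) :
  forall M : nat, exists N : nat, forall n : nat, N <= n ->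
    tau_card_ge (corona_adj m n) M.
Proof.
move=> M; have [K [P [Q PQ_magic]]] := cycle_edge_magic_exists hm.
exists M => n M_le_n.
exists [seq valence n K rho | rho <- iota 1 M]; split; last split.
- by rewrite map_inj_uniq ?iota_uniq // => rho rho'; rewrite /valence; lia.
- by rewrite size_map size_iota.
- move=> k /mapP[rho]; rewrite mem_iota => rho_range ->.
  by apply: valence_in_tau PQ_magic _; lia.
Qed.
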